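(* Let $p$ be an odd prime and $n = 2p$. Then the total graph $T(\Gamma(\mathbb{Z}_n))$ is not very cost effective.
   Context: $\mathbb{Z}_n$ is the ring of residue classes modulo $n$. The zero-divisor graph $\Gamma(\mathbb{Z}_n)$ has as vertices the nonzero zero-divisors of $\mathbb{Z}_n$, two distinct vertices being adjacent iff their product is $0$. The total graph $T(G)$ of a graph $G$ has vertex set $V(G)\cup E(G)$, with two vertices adjacent iff they are adjacent vertices of $G$, adjacent edges of $G$ (sharing an endpoint), or a vertex and an edge of $G$ incident to each other. For a graph $H=(V,E)$ and $S\subseteq V$, a vertex $v\in S$ is very cost effective if $|N(v)\cap S| < |N(v)\cap (V\setminus S)|$; $S$ is very cost effective if every vertex of $S$ is. A bipartition $\{S, V\setminus S\}$ is very cost effective if both parts are very cost effective, and $H$ is very cost effective if it has a very cost effective bipartition. *)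

From mathcomp Require Import all_boot.
Set Implicit Arguments. Unset Strict Implicit. Unset Printing Implicit Defensive.

(* A finite simple graph: a vertex set V inside a finite type T, with an
   adjacency relation adj (assumed symmetric and irreflexive on V where used). *)

Definition nbhd (T : finType) (V : {set T}) (adj : rel T) (v : T) : {set T} :=
  [set u in V | adj v u].

Definition vce_vertex (T : finType) (V : {set T}) (adj : rel T) (S : {set T}) (v : T) : bool :=
  #|nbhd V adj v :&: S| < #|nbhd V adj v :&: (V :\: S)|.

Definition vce_set (T : finType) (V : {set T}) (adj : rel T) (S : {set T}) : bool :=
  [forall v in S, vce_vertex V adj S v].

Definition vce_bipartition (T : finType) (V : {set T}) (adj : rel T) (S : {set T}) : bool :=
  (S \subset V) && vce_set V adj S && vce_set V adj (V :\: S).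

Definition very_cost_effective (T : finType) (V : {set T}) (adj : rel T) : Prop :=
  exists S : {set T}, vce_bipartition V adj S.

(* Total graph of (V, adj): vertices are inl v (v in V) and inr e where
   e = {x, y} is an edge (a 2-element subset of V whose elements are adjacent). *)
Definition is_edge (T : finType) (V : {set T}) (adj : rel T) (e : {set T}) : bool :=
  [exists x in V, exists y in V, adj x y && (e == [set x; y])].

Definition total_V (T : finType) (V : {set T}) (adj : rel T) : {set (T + {set T})} :=
  [set z | match z with
           | inl v => v \in V
           | inr e => is_edge V adj e
           end].

Definition total_adj (T : finType) (adj : rel T) : rel (T + {set T}) :=
  fun z w => match z, w with
  | inl u, inl v => adj u v
  | inr e, inr f => (e != f) && (e :&: f != set0)
  | inl v, inr e => v \in e
  | inr e, inl v => v \in e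
  end.

Definition zd_V (n : nat) : {set 'I_n} :=
  [set x : 'I_n | (x != 0 :> nat) &&
     [exists y : 'I_n, (y != 0 :> nat) && ((x * y) %% n == 0)]].

Definition zd_adj (n : nat) : rel 'I_n :=
  fun x y => (x != y) && ((x * y) %% n == 0).

Arguments zd_V n : clear implicits.
Arguments zd_adj n : clear implicits.

From mathcomp Require Import all_boot.
From mathcomp Require Import zify.

Set Implicit Arguments.
Unset Strict Implicit.
Unset Printing Implicit Defensive.

(* Γ(Z_2p) is the star with centre p, whose leaves are the nonzero even residues.
   In the total graph of a star, a leaf l has exactly two neighbours: the centre c
   and the spoke {l, c}.  A very cost effective bipartition must put both of them
   on the side opposite to l, so every spoke lies on the side of c while every
   leaf lies on the other side.  But then c has as many neighbours (the spokes)
   on its own side as on the other one (the leaves), so c is not very cost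
   effective. *)

Section VeryCostEffective.

Variables (T : finType) (V : {set T}) (adj : rel T) (S : {set T}).

Definition same_side (z : T) : {set T} := [set u | (u \in S) == (z \in S)].

Lemma in_nbhd z u : (u \in nbhd V adj z) = (u \in V) && adj z u.
Proof. exact: in_set. Qed.

Lemma nbhd_sub z : nbhd V adj z \subset V.
Proof. by apply/subsetP => u; rewrite in_nbhd => /andP[]. Qed.

Lemma vce_bipartition_nbhd z : vce_bipartition V adj S -> z \in V ->
  #|nbhd V adj z :&: same_side z| < #|nbhd V adj z :\: same_side z|.
Proof.
move=> /andP[/andP[_ vceS] vceC] zV.
have NV : nbhd V adj z :&: V = nbhd V adj z by apply/setIidPl/nbhd_sub.
have sideE : same_side z = if z \in S then S else ~: S.
  by apply/setP => u; rewrite inE; case: (z \in S); rewrite ?inE; case: (u \in S).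
rewrite sideE setDE; case zS: (z \in S).
- by move/forallP/(_ z): vceS; rewrite zS /vce_vertex setIDA NV setDE.
- move/forallP/(_ z): vceC; rewrite !inE zS zV /= /vce_vertex.
  by rewrite setIDA NV setDDr setDv set0U setIA NV setDE setCK.
Qed.

Lemma vce_bipartition_nbhd_le2 z u : vce_bipartition V adj S -> z \in V ->
  #|nbhd V adj z| <= 2 -> u \in nbhd V adj z -> (u \in S) != (z \in S).
Proof.
move=> vce zV N2 uN; apply/negP => uz.
have same_gt0 : 0 < #|nbhd V adj z :&: same_side z|.
  by rewrite card_gt0; apply/set0Pn; exists u; rewrite in_setI uN inE uz.
have := vce_bipartition_nbhd vce zV.
have := cardsID (same_side z) (nbhd V adj z); lia.
Qed.

End VeryCostEffective.

Section TotalGraphOfStar.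

Variables (T : finType) (V : {set T}) (adj : rel T) (c : T).
Hypothesis c_in_V : c \in V.
Hypothesis adj_irrefl : irreflexive adj.
Hypothesis leaf_adj_center : {in V, forall x, x != c -> adj x c}.
Hypothesis adj_center : {in V &, forall x y, adj x y -> (x == c) || (y == c)}.

Local Notation TV := (total_V V adj).
Local Notation N := (nbhd TV (total_adj adj)).

Lemma adj_neq x y : adj x y -> x != y.
Proof. by apply: contraTneq => ->; rewrite adj_irrefl. Qed.

Lemma spoke_in_total l : l \in V -> l != c -> inr [set l; c] \in TV.
Proof.
move=> lV lc; rewrite inE; apply/existsP; exists l; rewrite lV /=.
by apply/existsP; exists c; rewrite c_in_V leaf_adj_center ?eqxx.
Qed.

Lemma total_edgeP e : inr e \in TV -> exists2 l, l \in V :\ c & e = [set l; c].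
Proof.
rewrite inE => /existsP[x /andP[xV /existsP[y /andP[yV /andP[xy /eqP ->]]]]].
have [/eqP xc | /eqP yc] := orP (adj_center xV yV xy); subst.
- by exists y; [rewrite !inE eq_sym adj_neq | rewrite setUC].
- by exists x; rewrite // !inE adj_neq.
Qed.

Lemma nbhd_total_leaf l : l \in V :\ c -> N (inl l) = [set inl c; inr [set l; c]].
Proof.
case/setD1P=> lc lV; apply/eqP; rewrite eqEsubset subUset !sub1set !in_nbhd.
rewrite spoke_in_total // !inE /= c_in_V leaf_adj_center // set21 !andbT.
apply/subsetP => -[v | e]; rewrite in_nbhd => /andP[uT /= lu]; rewrite !inE.
- rewrite inE in uT; have := adj_center lV uT lu.
  by rewrite (negbTE lc) => /eqP->; rewrite eqxx.
- case/total_edgeP: uT lu => l' /setD1P[l'c _] ->.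
  by rewrite !inE (negbTE lc) orbF => /eqP->; rewrite eqxx orbT.
Qed.

Lemma nbhd_total_center :
  N (inl c) \subset [set inl l | l in V :\ c] :|: [set inr [set l; c] | l in V :\ c].
Proof.
apply/subsetP => -[v | e]; rewrite in_nbhd => /andP[uT /= cu]; rewrite inE; apply/orP.
- by left; apply/imsetP; exists v; rewrite // !inE eq_sym adj_neq //; rewrite inE in uT.
- by right; have [l lL ->] := total_edgeP uT; apply/imsetP; exists l.
Qed.

Lemma spokes_in_nbhd_total_center :
  [set inr [set l; c] | l in V :\ c] \subset N (inl c).
Proof.
apply/subsetP => _ /imsetP[l /setD1P[lc lV] ->].
by rewrite in_nbhd spoke_in_total //= set22.
Qed.

Lemma spoke_inj :
  {in V :\ c &, injective (fun l => inr [set l; c] : T + {set T})}.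
Proof.
move=> a b /setD1P[ac _] _ [eab].
have : a \in [set b; c] by rewrite -eab set21.
by rewrite !inE (negbTE ac) orbF => /eqP.
Qed.

Lemma vce_total_leaf_sides S l : vce_bipartition TV (total_adj adj) S -> l \in V :\ c ->
  (inl l \in S) != (inl c \in S) /\ (inr [set l; c] \in S) = (inl c \in S).
Proof.
move=> vce lL; have lT : inl l \in TV by rewrite inE; case/setD1P: lL.
have N2 : #|N (inl l)| <= 2 by rewrite nbhd_total_leaf // cards2 ltnS leq_b1.
have opp u : u \in [set inl c; inr [set l; c]] -> (u \in S) != (inl l \in S).
  by rewrite -nbhd_total_leaf // => uN; apply: vce_bipartition_nbhd_le2 vce lT N2 uN.
move: (opp _ (set21 _ _)) (opp _ (set22 _ _)).
by case: (inl l \in S); case: (inl c \in S); case: (inr _ \in S).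
Qed.

Theorem total_star_not_very_cost_effective : ~ very_cost_effective TV (total_adj adj).
Proof.
move=> [S vce].
have cT : inl c \in TV by rewrite inE.
have := vce_bipartition_nbhd vce cT; apply/negP; rewrite -leqNgt.
set same := same_side S (inl c).
have leaves_other : N (inl c) :\: same \subset [set inl l | l in V :\ c].
  apply/subsetP => u /setDP[uN]; case/setUP: (subsetP nbhd_total_center u uN) => //.
  case/imsetP => l lL ->; rewrite inE.
  by have [_ ->] := vce_total_leaf_sides vce lL; rewrite eqxx.
have spokes_same : [set inr [set l; c] | l in V :\ c] \subset N (inl c) :&: same.
  apply/subsetP => _ /imsetP[l lL ->].
  rewrite in_setI (subsetP spokes_in_nbhd_total_center) ?imset_f // inE.
  by have [_ ->] := vce_total_leaf_sides vce lL; rewrite eqxx.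
rewrite (leq_trans (subset_leq_card leaves_other)) // card_imset; last exact: inl_inj.
by rewrite -(card_in_imset spoke_inj) subset_leq_card.
Qed.

End TotalGraphOfStar.

Lemma zd_adj_irrefl n : irreflexive (zd_adj n).
Proof. by move=> x; rewrite /zd_adj eqxx. Qed.

Lemma eq_of_dvdn_lt_double p x : 0 < x < 2 * p -> p %| x -> x = p.
Proof.
move=> /andP[x_gt0 x_lt] /dvdnP[k def_x]; move: x_gt0 x_lt.
rewrite def_x muln_gt0 => /andP[k_gt0 p_gt0].
rewrite ltn_pmul2r // => k_lt2.
have -> : k = 1 by lia.
exact: mul1n.
Qed.

Section ZeroDivisorGraphDoublePrime.

Variables (p : nat) (c : 'I_(2 * p)).
Hypotheses (p_prime : prime p) (c_eq_p : c = p :> nat).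

Lemma zd_mul_eq0_dvd (x y : nat) : (x * y) %% (2 * p) == 0 -> (p %| x) || (p %| y).
Proof.
by move=> xy0; rewrite -Euclid_dvdM // (dvdn_trans (dvdn_mull 2 (dvdnn p)) xy0).
Qed.

Lemma zd_dvd_eq_center (x : 'I_(2 * p)) : x != 0 :> nat -> p %| x -> x = c.
Proof.
move=> x_neq0 p_dvd_x; apply: val_inj; rewrite /= c_eq_p.
by apply: eq_of_dvdn_lt_double p_dvd_x; rewrite lt0n x_neq0 ltn_ord.
Qed.

Lemma zd_V_center : c \in zd_V (2 * p).
Proof.
have two_lt : 2 < 2 * p by have := prime_gt1 p_prime; lia.
rewrite inE c_eq_p -lt0n prime_gt0 //=; apply/existsP; exists (Ordinal two_lt).
by rewrite /= mulnC modnn.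
Qed.

Lemma zd_adj_center : {in zd_V (2 * p) &, forall x y,
  zd_adj (2 * p) x y -> (x == c) || (y == c)}.
Proof.
move=> x y; rewrite !inE => /andP[x_neq0 _] /andP[y_neq0 _] /andP[_ xy0].
case/orP: (zd_mul_eq0_dvd xy0) => [p_dvd_x | p_dvd_y].
  by rewrite (zd_dvd_eq_center x_neq0 p_dvd_x) eqxx.
by rewrite (zd_dvd_eq_center y_neq0 p_dvd_y) eqxx orbT.
Qed.

Lemma zd_adj_leaf_center : {in zd_V (2 * p), forall x, x != c -> zd_adj (2 * p) x c}.
Proof.
move=> x; rewrite inE => /andP[x_neq0 /existsP[y /andP[y_neq0 xy0]]] x_neq_c.
rewrite /zd_adj x_neq_c; case/orP: (zd_mul_eq0_dvd xy0) => [p_dvd_x | p_dvd_y].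
  by rewrite (zd_dvd_eq_center x_neq0 p_dvd_x) eqxx in x_neq_c.
by rewrite -(zd_dvd_eq_center y_neq0 p_dvd_y).
Qed.

End ZeroDivisorGraphDoublePrime.

Theorem mainTheorem8 (p : nat) (hp : prime p) (hodd : odd p) :
  ~ very_cost_effective (total_V (zd_V (2 * p)%N) (zd_adj (2 * p)%N))
                        (total_adj (zd_adj (2 * p)%N)).
Proof.
pose c : 'I_(2 * p) := Ordinal (ltn_Pmull (isT : 1 < 2) (prime_gt0 hp)).
apply: (total_star_not_very_cost_effective (c := c)).
- exact: zd_V_center.
- exact: zd_adj_irrefl.
- exact: zd_adj_leaf_center.
- exact: zd_adj_center.
Qed.
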